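(* Let $\tilde{\boldsymbol{\gamma}}\ge0$ be a downlink SINR vector such that $\mathbf{I}-\tilde{\mathbf{F}}(\tilde{\boldsymbol{\gamma}})$ and $\mathbf{I}-\tilde{\mathbf{H}}(\tilde{\boldsymbol{\gamma}})$ are invertible, and let $\tilde{\mathbf{p}}(\tilde{\boldsymbol{\gamma}})=(\mathbf{I}-\tilde{\mathbf{F}}(\tilde{\boldsymbol{\gamma}}))^{-1}\tilde{\mathbf{U}}(\tilde{\boldsymbol{\gamma}})$. Then $\tilde{\boldsymbol{\gamma}}$ is feasible, i.e. $\tilde p_i(\tilde{\boldsymbol{\gamma}})\ge0$ for all $i\in\mathcal{M}$ and $\sum_{i\in\mathcal{M}^{\mathcal{B}}_m}\tilde p_i(\tilde{\boldsymbol{\gamma}})\le\tilde P^{\max}_m$ for all $m\in\mathcal{B}$, if and only if $$0\le \tilde P_m(\tilde{\boldsymbol{\gamma}})\le \tilde P^{\max}_m\quad\text{for all } m\in\mathcal{B},$$ where $\tilde{\mathbf{P}}(\tilde{\boldsymbol{\gamma}})=(\mathbf{I}-\tilde{\mathbf{H}}(\tilde{\boldsymbol{\gamma}}))^{-1}\tilde{\mathbf{N}}^*$.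
   Context: Downlink cellular model: users $\mathcal{M}=\{1,\dots,M\}$, BSs $\mathcal{B}=\{1,\dots,B\}$; user $i$ served by BS $b_i$, $\mathcal{M}^{\mathcal{B}}_m=\{i:b_i=m\}$. Downlink gains $\tilde h_{i,m}>0$ (BS $m$ to user $i$), noises $\tilde N_i>0$, BS power budgets $\tilde P^{\max}_m>0$. $\tilde U_i=\tilde\gamma_i\tilde N_i/\tilde h_{i,b_i}$; $\tilde F_{ii}=0$, $\tilde F_{ij}=\tilde\gamma_i\tilde h_{i,b_j}/\tilde h_{i,b_i}$ ($i\ne j$), so $\tilde{\mathbf{p}}(\tilde{\boldsymbol{\gamma}})$ is the power vector achieving downlink SINRs $\tilde\gamma_i(\tilde{\mathbf p})=\frac{\tilde h_{i,b_i}\tilde p_i}{\sum_{j\ne i}\tilde h_{i,b_j}\tilde p_j+\tilde N_i}=\tilde\gamma_i$. With $\tilde\theta_i=\tilde\gamma_i/(\tilde\gamma_i+1)$: $\tilde H_{mm}=\sum_{i\in\mathcal{M}^{\mathcal{B}}_m}\tilde\theta_i$, $\tilde H_{mn}=\sum_{i\in\mathcal{M}^{\mathcal{B}}_m}\frac{\tilde h_{i,n}}{\tilde h_{i,m}}\tilde\theta_i$ for $m\ne n$, and $\tilde N^*_m=\sum_{i\in\mathcal{M}^{\mathcal{B}}_m}\tilde\theta_i\tilde N_i/\tilde h_{i,m}$. *)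

(* Users are 'I_M, base stations are 'I_B. *)
From HB Require Import structures.
From mathcomp Require Import all_boot all_order all_algebra.
Set Implicit Arguments. Unset Strict Implicit. Unset Printing Implicit Defensive.
Import Order.TTheory GRing.Theory Num.Theory.
Local Open Scope ring_scope.

Section Downlink.
Variables (R : realFieldType) (M B : nat).
Variable (b : 'I_M -> 'I_B).          (* serving BS of user i *)
Variable (h : 'I_M -> 'I_B -> R).     (* downlink gain from BS m to user i *)
Variable (N : 'I_M -> R).             (* noise powers *)
Variable (gamma : 'I_M -> R).

Definition theta (i : 'I_M) : R := gamma i / (gamma i + 1).

Definition Uvec : 'cV[R]_M := \col_i (gamma i * N i / h i (b i)).

Definition Fmat : 'M[R]_M :=
  \matrix_(i, j) (if i == j then 0 else gamma i * h i (b j) / h i (b i)).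

Definition Hmat : 'M[R]_B :=
  \matrix_(m, n) (if m == n then \sum_(i | b i == m) theta i
                  else \sum_(i | b i == m) h i n / h i m * theta i).

Definition Nstar : 'cV[R]_B := \col_m (\sum_(i | b i == m) theta i * N i / h i m).

Definition pvec : 'cV[R]_M := invmx (1%:M - Fmat) *m Uvec.

Definition Pvec : 'cV[R]_B := invmx (1%:M - Hmat) *m Nstar.

Definition feasible (Pmax : 'I_B -> R) : Prop :=
  (forall i, 0 <= pvec i 0) /\
  (forall m, \sum_(i | b i == m) pvec i 0 <= Pmax m).
End Downlink.

(* Write Q_m for the total power transmitted by base station m under p(γ).
   Moving user i's own signal to the left of its SINR equation turns the
   factor γ_i into θ_i = γ_i/(γ_i+1), so p_i is θ_i/h_{i,b_i} times the
   total received power Σ_n h_{i,n} Q_n plus noise. Summing over the users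
   of each base station gives (I - H) Q = N*, hence P(γ) = Q. The budget
   constraints are then exactly Q ≤ Pmax, and Q ≥ 0 forces every p_i ≥ 0
   through the same formula, while p ≥ 0 trivially gives Q ≥ 0. *)
From HB Require Import structures.
From mathcomp Require Import all_boot all_order all_algebra.
From mathcomp Require Import ring.
Set Implicit Arguments. Unset Strict Implicit. Unset Printing Implicit Defensive.
Import Order.TTheory GRing.Theory Num.Theory.
Local Open Scope ring_scope.

Lemma unitmx_solve (R : comUnitRingType) (n k : nat) (A : 'M[R]_n)
    (x y : 'M[R]_(n, k)) :
  A \in unitmx -> A *m x = y -> x = invmx A *m y.
Proof. by move=> Au <-; rewrite mulKmx. Qed.

Section DownlinkPowers.
Variables (R : realFieldType) (M B : nat) (b : 'I_M -> 'I_B).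
Variables (h : 'I_M -> 'I_B -> R) (N : 'I_M -> R) (gamma : 'I_M -> R).
Hypothesis hpos : forall i m, 0 < h i m.
Hypothesis gamma_ge0 : forall i, 0 <= gamma i.

Definition bs_load (p : 'cV[R]_M) : 'cV[R]_B :=
  \col_m \sum_(i | b i == m) p i 0.

Definition received_power (p : 'cV[R]_M) (i : 'I_M) : R :=
  \sum_j h i (b j) * p j 0.

Let h_neq0 i m : h i m != 0. Proof. by rewrite gt_eqF. Qed.

Lemma theta_ge0 i : 0 <= theta gamma i.
Proof. by rewrite divr_ge0 // addr_ge0. Qed.

Lemma received_power_bs_load p i :
  received_power p i = \sum_n h i n * bs_load p n 0.
Proof.
rewrite /received_power (partition_big b xpredT) //=.
apply: eq_bigr => n _; rewrite mxE mulr_sumr.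
by apply: eq_bigr => j /eqP <-.
Qed.

Lemma sinr_fixed_point p :
  (1%:M - Fmat b h gamma) *m p = Uvec b h N gamma -> forall i,
  p i 0 = theta gamma i * (received_power p i + N i) / h i (b i).
Proof.
move/matrixP => Fp i; move: (Fp i 0); rewrite mulmxBl mul1mx !mxE (bigD1 i) //=.
rewrite [Fmat _ _ _ i i]mxE eqxx mul0r add0r.
have -> : \sum_(j | j != i) Fmat b h gamma i j * p j 0 =
    gamma i / h i (b i) * \sum_(j | j != i) h i (b j) * p j 0.
  rewrite mulr_sumr; apply: eq_bigr => j /negPf ji.
  by rewrite !mxE eq_sym ji; field.
move=> Ep.
rewrite /theta /received_power (bigD1 i) //=.
have gamma1_neq0 : gamma i + 1 != 0 by rewrite gt_eqF // ltr_wpDl.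
have -> : p i 0 = gamma i * N i / h i (b i) +
    gamma i / h i (b i) * \sum_(j | j != i) h i (b j) * p j 0.
  by rewrite -Ep; ring.
by field; rewrite gamma1_neq0 h_neq0.
Qed.

Lemma bs_load_solves_H p :
  (1%:M - Fmat b h gamma) *m p = Uvec b h N gamma ->
  (1%:M - Hmat b h gamma) *m bs_load p = Nstar b h N gamma.
Proof.
move=> Fp; apply/matrixP => m k; rewrite (ord1 k) mulmxBl mul1mx !mxE.
have -> : \sum_n Hmat b h gamma m n * bs_load p n 0 =
    \sum_(i | b i == m) theta gamma i / h i m * received_power p i.
  transitivity (\sum_n \sum_(i | b i == m)
                  theta gamma i / h i m * (h i n * bs_load p n 0)).
    apply: eq_bigr => n _; rewrite [Hmat _ _ _ _ _]mxE.
    by case: eqP => [<-|_]; rewrite mulr_suml; apply: eq_bigr => i /eqP bi; field.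
  rewrite exchange_big; apply: eq_bigr => i _.
  by rewrite -mulr_sumr received_power_bs_load.
rewrite -sumrB; apply: eq_bigr => i /eqP bi.
by rewrite (sinr_fixed_point Fp) bi; field.
Qed.

Lemma bs_load_ge0_powers_ge0 p :
  (forall i, 0 < N i) ->
  (1%:M - Fmat b h gamma) *m p = Uvec b h N gamma ->
  (forall m, 0 <= bs_load p m 0) -> forall i, 0 <= p i 0.
Proof.
move=> Npos Fp Q_ge0 i; rewrite (sinr_fixed_point Fp).
have received_ge0 : 0 <= received_power p i.
  rewrite received_power_bs_load; apply: sumr_ge0 => n _.
  exact: mulr_ge0 (ltW (hpos i n)) (Q_ge0 n).
apply: divr_ge0; last exact: ltW.
by rewrite mulr_ge0 ?theta_ge0 // addr_ge0 // ltW.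
Qed.

Lemma pvec_solves_F :
  (1%:M - Fmat b h gamma) \in unitmx ->
  (1%:M - Fmat b h gamma) *m pvec b h N gamma = Uvec b h N gamma.
Proof. by move=> F_inv; rewrite /pvec mulmxA mulmxV // mul1mx. Qed.

Lemma Pvec_bs_load :
  (1%:M - Fmat b h gamma) \in unitmx -> (1%:M - Hmat b h gamma) \in unitmx ->
  Pvec b h N gamma = bs_load (pvec b h N gamma).
Proof.
move=> F_inv H_inv; symmetry; apply: unitmx_solve => //.
exact/bs_load_solves_H/pvec_solves_F.
Qed.

End DownlinkPowers.

Theorem corollary2 (R : realFieldType) (M B : nat) (b : 'I_M -> 'I_B)
    (h : 'I_M -> 'I_B -> R) (N : 'I_M -> R) (Pmax : 'I_B -> R)
    (gamma : 'I_M -> R)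
    (hpos : forall i m, 0 < h i m) (Npos : forall i, 0 < N i)
    (Pmaxpos : forall m, 0 < Pmax m)
    (gamma_ge0 : forall i, 0 <= gamma i)
    (F_inv : (1%:M - Fmat b h gamma) \in unitmx)
    (H_inv : (1%:M - Hmat b h gamma) \in unitmx) :
  feasible b h N gamma Pmax <->
  (forall m, 0 <= Pvec b h N gamma m 0 <= Pmax m).
Proof.
rewrite (Pvec_bs_load N hpos gamma_ge0 F_inv H_inv) /feasible.
have Fp := pvec_solves_F N F_inv.
split=> [[p_ge0 p_budget] m | QP].
  by rewrite mxE p_budget andbT sumr_ge0.
split=> [|m]; last by have /andP[_] := QP m; rewrite mxE.
apply: (bs_load_ge0_powers_ge0 hpos gamma_ge0 Npos Fp) => m.
by have /andP[] := QP m.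
Qed.
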